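(* Under the standing assumptions below, for each $i$ the category $D(\varepsilon_{a_i})$ is full in $R$: every arrow of $Q$ (and more generally every morphism of $R$) between two vertices of $D(\varepsilon_{a_i})$ belongs to $D(\varepsilon_{a_i})$.
   Context: Standing assumptions: $R=kQ/I$ is a string algebra (I generated by paths; each vertex has at most two incoming and two outgoing arrows; for each arrow $\alpha:x\to y$ at most one arrow $\beta$ from $y$ with $\alpha\beta\notin I$ and at most one arrow $\gamma$ into $x$ with $\gamma\alpha\notin I$; paths composed left to right) with no DOZE, $Q$ contains a band, and every band has either only exiting arrows or only entering arrows, and $Q$ is not just a single band without entering or exiting arrows. A walk is a sequence of arrows and inverse arrows, reduced if no subwalk $\alpha\alpha^{-1}$ or $\alpha^{-1}\alpha$; a string is a reduced walk with no zero-relation; a band is a cyclic string, not a power of another, all of whose powers are strings. Arrows entering/exiting a band are arrows not on the band with target/source on the band. A double-zero is a reduced walk $\rho_1\nu\rho_2$ with $\rho_1,\rho_2$ paths in $I$ traversed along their arrows; a DOZE is a double-zero $\rho_1\omega_1\omega_2\omega_3\rho_2$ with $\omega_2$ a band. Let $\Theta_1,\dots,\Theta_n$ be the bands (up to cyclic permutation) having only exiting arrows; on each $\Theta_i$ choose a vertex $a_i$ such that all arrows starting at $a_i$ belong to $\Theta_i$. For a string $\omega$, $W(\omega)$ is the set of strings of the form $\omega_1\omega\omega_2$, and $D(\omega)$ is the subcategory whose objects are the vertices through which some string of $W(\omega)$ passes and whose morphisms are generated by the arrows through which some string of $W(\omega)$ passes. $\varepsilon_{a}$ denotes the trivial path at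 $a$. *)

From mathcomp Require Import all_boot.
Set Implicit Arguments. Unset Strict Implicit. Unset Printing Implicit Defensive.

Section StringAlgebra.
(* Quiver Q = (V, Ar, s, t); I is the ideal generated by the paths in [rels].
   A path is a sequence of arrows composed LEFT TO RIGHT: [:: a1; ...; an]
   with t a_i = s a_(i+1). *)
Variables (V Ar : finType) (s t : Ar -> V) (rels : seq (seq Ar)).

Definition is_path (p : seq Ar) : bool := sorted (fun a b => t a == s b) p.

Definition in_I (p : seq Ar) : bool := has (fun r => infix r p) rels.

Definition string_algebra : Prop :=
  (forall r, r \in rels -> is_path r /\ 2 <= size r) /\
  (forall x : V, #|[pred a | t a == x]| <= 2 /\ #|[pred a | s a == x]| <= 2) /\
  (forall al : Ar,
      #|[pred b | (s b == t al) && ~~ in_I [:: al; b]]| <= 1 /\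
      #|[pred g | (t g == s al) && ~~ in_I [:: g; al]]| <= 1).

(* letters: (a, true) = the arrow a, (a, false) = the inverse arrow a^-1 *)
Definition letter := (Ar * bool)%type.
Definition lsrc (l : letter) : V := if l.2 then s l.1 else t l.1.
Definition ltgt (l : letter) : V := if l.2 then t l.1 else s l.1.
Definition dir (a : Ar) : letter := (a, true).
Definition inv (a : Ar) : letter := (a, false).

(* a walk: a starting vertex and a sequence of letters (empty = trivial walk) *)
Definition walk := (V * seq letter)%type.
Definition wstart (w : walk) : V := w.1.
Definition wlet (w : walk) : seq letter := w.2.
Definition wend (w : walk) : V := last w.1 (map ltgt w.2).
Definition wverts (w : walk) : seq V := w.1 :: map ltgt w.2.
Definition warrows (w : walk) : seq Ar := map fst w.2.

Definition valid_walk (w : walk) : bool :=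
  sorted (fun l1 l2 => ltgt l1 == lsrc l2) w.2 &&
  (if w.2 is l :: _ then lsrc l == w.1 else true).

Definition reduced (w : walk) : bool :=
  sorted (fun l1 l2 => ~~ ((l1.1 == l2.1) && (l1.2 != l2.2))) w.2.

Definition no_zero_relation (w : walk) : Prop :=
  forall p : seq Ar, in_I p ->
    ~~ infix (map dir p) w.2 /\ ~~ infix (map inv (rev p)) w.2.

Definition is_string (w : walk) : Prop :=
  valid_walk w /\ reduced w /\ no_zero_relation w.

(* concatenation (meaningful when wend w1 = wstart w2) and powers *)
Definition wcat (w1 w2 : walk) : walk := (w1.1, w1.2 ++ w2.2).
Definition wpow (w : walk) (n : nat) : walk := (w.1, flatten (nseq n w.2)).

Definition trivial_walk (x : V) : walk := (x, [::]).

Definition is_band (w : walk) : Prop :=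
  is_string w /\ w.2 != [::] /\ wend w = wstart w /\
  (~ exists (u : walk) (k : nat), 1 < k /\ w = wpow u k) /\
  (forall n, 0 < n -> is_string (wpow w n)).

Definition entering (w : walk) (a : Ar) : Prop :=
  a \notin warrows w /\ t a \in wverts w.
Definition exiting (w : walk) (a : Ar) : Prop :=
  a \notin warrows w /\ s a \in wverts w.

(* double-zero  rho1 nu rho2  with nu = om1 om2 om3 and om2 a band *)
Definition is_DOZE (w : walk) : Prop :=
  exists (r1 r2 : seq Ar) (o1 o2 o3 : seq letter),
    w.2 = map dir r1 ++ o1 ++ o2 ++ o3 ++ map dir r2 /\
    valid_walk w /\ reduced w /\ in_I r1 /\ in_I r2 /\
    is_band (wend (w.1, map dir r1 ++ o1), o2).

Definition has_DOZE : Prop := exists w, is_DOZE w.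

Definition standing_assumptions : Prop :=
  string_algebra /\
  ~ has_DOZE /\
  (exists w, is_band w) /\
  (forall w, is_band w ->
     (forall a, ~ entering w a) \/ (forall a, ~ exiting w a)) /\
  ~ (exists w, is_band w /\ (forall a : Ar, a \in warrows w) /\
                           (forall x : V, x \in wverts w)).

Definition inW (om w : walk) : Prop :=
  is_string w /\
  exists w1 w2 : walk, wend w1 = wstart om /\ wend om = wstart w2 /\
                       w = wcat w1 (wcat om w2).

Definition D_obj (om : walk) (x : V) : Prop :=
  exists w, inW om w /\ x \in wverts w.
Definition D_arr (om : walk) (a : Ar) : Prop :=
  exists w, inW om w /\ a \in warrows w.

End StringAlgebra.

(* Let c q be a nonzero path whose end points lie in D(e_a), i.e. are the ends of strings u and
   v starting at a. By induction on the length of the path we may assume that u does not end with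
   c^-1, that v does not end with the last arrow e of the path, and that e is not on the band
   Theta (otherwise an end arrow of the path lies on a string through a, together with its end
   points, and the rest of the path is shorter). Then u followed by the path is a reduced walk;
   if it is a string, all its arrows lie in D(e_a). Otherwise a zero relation rho straddles the
   end of u, and  rho, v^-1, Theta wound once through a, the part of u before rho, and rho again
   form a double zero around a band, i.e. a DOZE. Single arrows are nonzero paths because the
   relations have length at least 2. *)

From Stdlib Require Import Classical.
From Pilot Require Import Defs.
From mathcomp Require Import all_boot zify.
Set Implicit Arguments. Unset Strict Implicit. Unset Printing Implicit Defensive.

Section SeqFacts.
Variable T : eqType.
Implicit Types (r : rel T) (A B X : seq T).

Lemma sorted_cat_link r x A B : A != [::] -> B != [::] ->
  sorted r (A ++ B) = [&& sorted r A, r (last x A) (head x B) & sorted r B].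
Proof.
case: A => [|a A] // _; case: B => [|b B] // _.
by rewrite /= cat_path /= andbA.
Qed.

Lemma prefix_cat_cases X A B : prefix X (A ++ B) ->
  prefix X A \/ exists X2 B2, [/\ X = A ++ X2, X2 != [::] & B = X2 ++ B2].
Proof.
elim: A X => [|a A IH] [|x X] //=; try by left.
  by move=> /prefixP[B2 ->]; right; exists (x :: X), B2.
move=> /andP[/eqP-> /IH[h|[X2 [B2 [-> h1 h2]]]]]; first by left; rewrite eqxx.
by right; exists X2, B2.
Qed.

Lemma infix_cat_cases X A B : infix X (A ++ B) ->
  [\/ infix X A, infix X B |
      exists X1 X2 A1 B2, [/\ X = X1 ++ X2, X1 != [::], X2 != [::],
                              A = A1 ++ X1 & B = X2 ++ B2]].
Proof.
elim: A => [|a A IH]; first by constructor 2.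
rewrite cat_cons infix_consl -cat_cons => /orP[].
  case/prefix_cat_cases => [h|[X2 [B2 [-> h1 h2]]]]; first by constructor 1; apply: prefixW.
  by constructor 3; exists (a :: A), X2, [::], B2.
case/IH => [h|h|[X1 [X2 [A1 [B2 [h1 h2 h3 h4 h5]]]]]].
- by constructor 1; rewrite infix_consl h orbT.
- by constructor 2.
- by constructor 3; exists X1, X2, (a :: A1), B2; rewrite h4.
Qed.

Lemma eq_cat_leq_size A B A' B' : A ++ B = A' ++ B' -> size A <= size A' ->
  exists C, A' = A ++ C /\ B = C ++ B'.
Proof.
elim: A A' => [|x A IH] A' /=; first by move=> ->; exists A'.
case: A' => [|x' A'] //= [-> h] hs.
by have [C [-> ->]] := IH A' h hs; exists C.
Qed.

End SeqFacts.

Lemma infix_map (T1 T2 : eqType) (f : T1 -> T2) X Y :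
  infix X Y -> infix (map f X) (map f Y).
Proof. by case/infixP=> A [B ->]; rewrite !map_cat; apply: infix_infix. Qed.

Lemma infix_map_inj (T1 T2 : eqType) (f : T1 -> T2) X Y :
  injective f -> infix (map f X) (map f Y) = infix X Y.
Proof.
move=> finj; have pre Z W : prefix (map f Z) (map f W) = prefix Z W.
  by elim: Z W => [|z Z IH] [|w W] //=; rewrite (inj_eq finj) IH.
elim: Y => [|y Y IH]; first by case: X.
by rewrite map_cons !infix_consl -map_cons pre IH.
Qed.

Section Walks.
Variables (V Ar : finType) (s t : Ar -> V) (rels : seq (seq Ar)).
Local Notation letter := (Ar * bool)%type.
Local Notation lsrc := (lsrc s t).
Local Notation ltgt := (ltgt s t).
Local Notation str x L := (is_string s t rels (x, L)).
Local Notation dirs := (map (@dir Ar)).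
Local Notation invs := (map (@Defs.inv Ar)).
Implicit Types (l : letter) (L : seq letter) (x : V).

Definition inv_letter l : letter := (l.1, ~~ l.2).
Definition inv_word L := rev (map inv_letter L).

(* [reduced (x, L)] is [sorted nocancel L] by conversion *)
Definition nocancel l1 l2 : bool := ~~ ((l1.1 == l2.1) && (l1.2 != l2.2)).

Fixpoint is_walk x L : bool :=
  if L is l :: L' then (lsrc l == x) && is_walk (ltgt l) L' else true.
Definition walk_end x L : V := last x (map ltgt L).

Lemma lsrc_inv l : lsrc (inv_letter l) = ltgt l.
Proof. by case: l => a []. Qed.
Lemma ltgt_inv l : ltgt (inv_letter l) = lsrc l.
Proof. by case: l => a []. Qed.
Lemma inv_letterK : involutive inv_letter.
Proof. by case=> a b; rewrite /inv_letter negbK. Qed.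
Lemma inv_letter_inj : injective inv_letter.
Proof. exact: inv_inj inv_letterK. Qed.
Lemma dir_inj : injective (@dir Ar).
Proof. by move=> x y [->]. Qed.
Lemma inv_wordK : involutive inv_word.
Proof. by move=> L; rewrite /inv_word map_rev revK -map_comp (eq_map inv_letterK) map_id. Qed.

Lemma nocancelE l1 l2 : nocancel l1 l2 = (l2 != inv_letter l1).
Proof.
case: l1 l2 => a1 b1 [a2 b2]; rewrite /nocancel /inv_letter /= xpair_eqE eq_sym.
by case: b1; case: b2.
Qed.

Lemma nocancel_inv l1 l2 : nocancel (inv_letter l2) (inv_letter l1) = nocancel l1 l2.
Proof. by case: l1 l2 => a1 b1 [a2 b2]; rewrite /nocancel /= eq_sym; case: b1; case: b2. Qed.

Lemma sorted_inv_word L : sorted nocancel (inv_word L) = sorted nocancel L.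
Proof.
rewrite rev_sorted; case: L => [|l L] //=.
by elim: L l => [|l' L IH] l //=; rewrite IH nocancel_inv.
Qed.

Lemma nocancel_dirs r : sorted nocancel (dirs r).
Proof. by case: r => [|c r] //=; elim: r c => [|c' r IH] c //=; rewrite IH /nocancel /= andbF. Qed.

Lemma valid_walkE x L : valid_walk s t (x, L) = is_walk x L.
Proof.
have walk_path l L' : path (fun l1 l2 => ltgt l1 == lsrc l2) l L' = is_walk (ltgt l) L'.
  by elim: L' l => [|l' L' IH] l //=; rewrite IH eq_sym.
by case: L => [|l L] //; rewrite /valid_walk /= walk_path andbC.
Qed.

Lemma is_walk_cat x A B : is_walk x (A ++ B) = is_walk x A && is_walk (walk_end x A) B.
Proof. by elim: A x => [|l A IH] x //=; rewrite IH andbA. Qed.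

Lemma walk_end_cat x A B : walk_end x (A ++ B) = walk_end (walk_end x A) B.
Proof. by rewrite /walk_end map_cat last_cat. Qed.

Lemma is_walk_inv x L : is_walk x L ->
  is_walk (walk_end x L) (inv_word L) /\ walk_end (walk_end x L) (inv_word L) = x.
Proof.
elim: L x => [|l L IH] x //= /andP[/eqP hx /IH[h1 h2]].
rewrite /inv_word /= rev_cons -cats1 is_walk_cat walk_end_cat -/(inv_word L).
by rewrite h1 h2 /= lsrc_inv eqxx /walk_end /= ltgt_inv hx.
Qed.

Lemma is_walk_dirs c r x : is_walk x (dirs (c :: r)) = (s c == x) && is_path s t (c :: r).
Proof.
elim: r c x => [|c' r IH] c x; first by rewrite /= andbT.
have /= := IH c' (t c); rewrite /lsrc /ltgt /= => ->.
by rewrite [t c == _]eq_sym.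
Qed.

Lemma walk_end_dirs c r x : walk_end x (dirs (c :: r)) = t (last c r).
Proof.
rewrite /walk_end -map_comp.
by have -> : map (ltgt \o @dir Ar) (c :: r) = map t (c :: r) by []; rewrite /= last_map.
Qed.

Lemma lsrc_in_wverts x L l : is_walk x L -> l \in L -> lsrc l \in wverts s t (x, L).
Proof.
elim: L x => [|l0 L IH] x //= /andP[/eqP h /IH hL]; rewrite inE => /orP[/eqP->|/hL].
  by rewrite h mem_head.
by rewrite /= !inE => ->; rewrite !orbT.
Qed.

Lemma ltgt_in_wverts x L l : l \in L -> ltgt l \in wverts s t (x, L).
Proof. by move=> hl; rewrite /= inE (map_f ltgt hl) orbT. Qed.

Lemma wverts_split x L z : z \in wverts s t (x, L) ->
  exists A B, L = A ++ B /\ walk_end x A = z.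
Proof.
elim: L x => [|l L IH] x /=; first by rewrite inE => /eqP->; exists [::], [::].
rewrite inE => /orP[/eqP->|/IH[A [B [-> hA]]]]; first by exists [::], (l :: L).
by exists (l :: A), B.
Qed.

Lemma in_I_infix p p' : infix p p' -> in_I rels p -> in_I rels p'.
Proof. by move=> h /hasP[r hr hrp]; apply/hasP; exists r => //; apply: infix_trans h. Qed.

Lemma string_inv x L : str x L -> str (walk_end x L) (inv_word L).
Proof.
move=> [hv [hr hz]]; move: hv; rewrite valid_walkE => /is_walk_inv[hw _].
split; first by rewrite valid_walkE.
split; first by move: hr; rewrite /reduced /= sorted_inv_word.
move=> p /hz[/= h1 h2]; rewrite /inv_word -!infix_revLR -!map_rev revK.
have -> : dirs (rev p) = map inv_letter (invs (rev p)) by rewrite -map_comp.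
have -> : invs p = map inv_letter (dirs p) by rewrite -map_comp.
by rewrite !(infix_map_inj _ _ inv_letter_inj).
Qed.

Lemma string_infix x A B C : str x (A ++ B ++ C) -> str (walk_end x A) B.
Proof.
move=> [hv [hr hz]]; split.
  by move: hv; rewrite !valid_walkE !is_walk_cat => /and3P[].
split; first exact: infix_sorted (infix_infix _ _ _) hr.
move=> p /hz[h1 h2]; split; [move: h1|move: h2]; apply: contra => h;
  exact: infix_trans h (infix_infix _ _ _).
Qed.

Local Notation Dobj a := (D_obj s t rels (trivial_walk Ar a)).
Local Notation Darr a := (D_arr s t rels (trivial_walk Ar a)).

Lemma inW_through x L a : str x L -> a \in wverts s t (x, L) ->
  inW s t rels (trivial_walk Ar a) (x, L).
Proof.
move=> hs /wverts_split[A [B [eL hA]]]; split=> //.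
by exists (x, A), (a, B); rewrite eL.
Qed.

Lemma Darr_string x L a b : str x L -> a \in wverts s t (x, L) ->
  b \in map fst L -> Darr a b.
Proof. by move=> hs ha hb; exists (x, L); split=> //; apply: inW_through. Qed.

Lemma start_in_wverts x L : x \in wverts s t (x, L).
Proof. exact: mem_head. Qed.

(* a string through a and z can be cut at a and z and, if needed, reversed *)
Lemma Dobj_string a z : Dobj a z -> exists u, str a u /\ walk_end a u = z.
Proof.
move=> [[x M] [[hs [[x1 A] [[x2 B] [hA [_ [ex eM]]]]]] hz]].
subst x1; change (walk_end x A = a) in hA.
have [A' [B' [hM hA']]] := wverts_split hz.
rewrite eM in hM; have [le|lt] := leqP (size A) (size A').
  have [C [eA' eB]] := eq_cat_leq_size hM le.
  exists C; split; last by rewrite -hA' eA' walk_end_cat hA.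
  by rewrite -hA; apply: (@string_infix _ _ _ B'); rewrite -eB -eM.
have [C [eA eB]] := eq_cat_leq_size (esym hM) (ltnW lt).
have hC : str z C by rewrite -hA'; apply: (@string_infix _ _ _ B); rewrite catA -eA -eM.
have eCa : walk_end z C = a by rewrite -hA' -walk_end_cat -eA.
exists (inv_word C); split; first by rewrite -eCa; apply: string_inv.
by move: hC => [+ _]; rewrite valid_walkE => /is_walk_inv[_]; rewrite eCa.
Qed.

Definition band_letter (d : letter) L i : letter := nth d L (i %% size L).
Definition band_window d L i k : seq letter := map (band_letter d L) (iota i k).

Section Band.
Variables (θ : V) (L : seq letter) (d : letter).
Hypothesis band : is_band s t rels (θ, L).
Local Notation W := (band_letter d L).
Local Notation win := (band_window d L).
Local Notation m := (size L).

Lemma band_size_gt0 : 0 < m.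
Proof. by case: band => _ []; case: (L). Qed.

Lemma band_closed : walk_end θ L = θ.
Proof. by case: band => _ [_ []]. Qed.

Lemma band_is_walk : is_walk θ L.
Proof. by case: band => -[+ _] _; rewrite valid_walkE. Qed.

Lemma band_letter_period q i : W (q * m + i) = W i.
Proof. by rewrite /band_letter modnMDl. Qed.

Lemma band_letter0 : lsrc (W 0) = θ.
Proof.
by move: band_is_walk band_size_gt0; rewrite /band_letter mod0n; case: (L) => //= l L' /andP[/eqP].
Qed.

(* the square of the band is a string, which links the last letter to the first *)
Lemma band_letter_succ j :
  ltgt (W j) == lsrc (W j.+1) /\ nocancel (W j) (W j.+1).
Proof.
have hm := band_size_gt0; have hc := ltn_pmod j hm.
have [_ [_ [_ [_ /(_ 2 isT)]]]] := band; rewrite /wpow /= cats0.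
move=> [/andP[hv _] [hr _]]; rewrite /reduced /= in hr.
have hi : (j %% m).+1 < size (L ++ L) by rewrite size_cat; lia.
have eS : nth d (L ++ L) (j %% m).+1 = W j.+1.
  rewrite /band_letter nth_cat.
  have -> : j.+1 %% m = (j %% m).+1 %% m by rewrite -addn1 -modnDml addn1.
  case: ltnP => h; first by rewrite (modn_small h).
  have -> : (j %% m).+1 = m by apply/eqP; rewrite eqn_leq hc h.
  by rewrite subnn modnn.
have eJ : nth d (L ++ L) (j %% m) = W j by rewrite nth_cat hc.
move/(sortedP d): hv => /(_ _ hi); move/(sortedP d): hr => /(_ _ hi).
by rewrite eS eJ.
Qed.

Lemma mem_band_letter j : W j \in L.
Proof. by rewrite mem_nth // ltn_pmod // band_size_gt0. Qed.

Lemma band_letter_link j : ltgt (W j) = lsrc (W j.+1).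
Proof. by have [/eqP] := band_letter_succ j. Qed.

Lemma band_window_walk i k :
  is_walk (lsrc (W i)) (win i k) /\ walk_end (lsrc (W i)) (win i k) = lsrc (W (i + k)).
Proof.
elim: k i => [|k IH] i; first by rewrite addn0.
have [h1 h2] := IH i.+1.
by rewrite /= eqxx band_letter_link h1 /walk_end /= band_letter_link -/(walk_end _ _) h2 addSnnS.
Qed.

Lemma band_window_sorted i k : sorted nocancel (win i k).
Proof.
apply/(sortedP d) => j hj; rewrite size_map size_iota in hj.
rewrite !(nth_map 0) ?size_iota ?(ltnW hj) // !nth_iota ?(ltnW hj) // addnS.
by have [] := band_letter_succ (i + j).
Qed.

Lemma band_windowD i k1 k2 : win i (k1 + k2) = win i k1 ++ win (i + k1) k2.
Proof. by rewrite /band_window iotaD map_cat. Qed.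

Lemma band_window_period q : win (q * m) m = L.
Proof.
apply: (@eq_from_nth _ d); first by rewrite size_map size_iota.
move=> j; rewrite size_map size_iota => hj.
by rewrite (nth_map 0) ?size_iota // nth_iota // band_letter_period /band_letter modn_small.
Qed.

Lemma band_window_last l i k : last l (win i k.+1) = W (i + k).
Proof. by rewrite /band_window -addn1 iotaD map_cat last_cat. Qed.

Lemma band_window_around i j : exists N Z1 Z3,
  [/\ win i N.+1 = Z1 ++ L ++ Z3, W (i + N) = W j & walk_end (lsrc (W i)) Z1 = θ].
Proof.
have hA : i <= i.+1 * m by rewrite (leq_trans (leqnSn i)) // leq_pmulr ?band_size_gt0.
exists (i.+1 * m - i + m + j %% m), (win i (i.+1 * m - i)), (win (i.+1 * m + m) (j %% m).+1).
rewrite !addnA (subnKC hA); split.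
- by rewrite -addnS !band_windowD !addnA (subnKC hA) band_window_period catA.
- by rewrite -mulSnr band_letter_period /band_letter modn_mod.
- have [_ ->] := band_window_walk i (i.+1 * m - i).
  by rewrite (subnKC hA) -[_ * m]addn0 band_letter_period band_letter0.
Qed.

Lemma band_agree_split i v : exists K v2, v = win i K ++ v2 /\
  forall l v2', v2 = l :: v2' -> l != W (i + K).
Proof.
elim: v i => [|l v IH] i; first by exists 0, [::].
have [/eqP el|ne] := boolP (l == W i); last first.
  by exists 0, (l :: v); split=> // l' v' [<- _]; rewrite addn0.
have [K [v2 [-> h]]] := IH i.+1.
by exists K.+1, v2; split; [rewrite el | rewrite addnS -addSn].
Qed.

Lemma band_letter_to a : a \in wverts s t (θ, L) -> exists i, ltgt (W i) = a.
Proof.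
have hm := band_size_gt0; rewrite /= inE => /orP[/eqP->|].
  exists m.-1; rewrite /band_letter modn_small ?prednK // nth_last.
  by rewrite -band_closed /walk_end; case: (L) hm => //= l L' _; rewrite last_map.
move=> /(nthP (ltgt d)) [k]; rewrite size_map => hk <-.
by exists k; rewrite /band_letter (modn_small hk) (nth_map d).
Qed.

End Band.

Lemma inv_word_pow n L : inv_word (flatten (nseq n L)) = flatten (nseq n (inv_word L)).
Proof. by rewrite /inv_word map_flatten map_nseq rev_flatten map_nseq rev_nseq. Qed.

Lemma walk_end_pow x L n : walk_end x L = x -> walk_end x (flatten (nseq n L)) = x.
Proof. by move=> h; elim: n => //= n IH; rewrite walk_end_cat h. Qed.

Lemma band_inv θ L : is_band s t rels (θ, L) -> is_band s t rels (θ, inv_word L).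
Proof.
move=> hb; have [hs [hne [_ [hprim hpow]]]] := hb.
have hcl' := band_closed hb.
have [_ hcl''] := is_walk_inv (band_is_walk hb); rewrite hcl' in hcl''.
split; first by rewrite -{1}hcl'; exact: string_inv hs.
split; first by rewrite /= -size_eq0 size_rev size_map size_eq0.
split; first exact: hcl''.
split.
  move=> [[x u] [k [hk [_ eL]]]]; apply: hprim; exists (θ, inv_word u), k; split=> //.
  by rewrite /wpow /= -inv_word_pow -eL inv_wordK.
move=> n /hpow; rewrite /wpow /= => /string_inv.
by rewrite walk_end_pow // inv_word_pow.
Qed.

Lemma band_letter_inv d L i : 0 < size L ->
  exists j, band_letter d (inv_word L) j = inv_letter (band_letter d L i).
Proof.
move=> hm; have hc := ltn_pmod i hm; set c := i %% size L in hc *.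
have hj : size L - c.+1 < size L by rewrite ltn_subrL.
exists (size L - c.+1).
rewrite /band_letter /inv_word size_rev size_map (modn_small hj) nth_rev ?size_map //.
by rewrite (nth_map d) subnSK // ?subKn ?leq_subr // ltnW.
Qed.

Lemma sorted_nocancel_cat d A B : A != [::] -> B != [::] ->
  sorted nocancel (A ++ B) =
  [&& sorted nocancel A, head d B != inv_letter (last d A) & sorted nocancel B].
Proof. by move=> hA hB; rewrite (sorted_cat_link _ d hA hB) nocancelE. Qed.

Lemma head_inv_word_cat d L B : L != [::] ->
  head d (inv_word L ++ B) = inv_letter (last d L).
Proof. by case/lastP: L => [|L l] // _; rewrite /inv_word map_rcons rev_rcons last_rcons. Qed.

Lemma last_inv_word d L : L != [::] -> last d (inv_word L) = inv_letter (head d L).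
Proof. by case: L => [|l L] // _; rewrite /inv_word /= rev_cons last_rcons. Qed.

(* nu: back along v^-1 (minus the initial part of v that runs along the band), then once around
   the band through its base point θ, stopping at a just after the band letter i *)
Lemma band_return θ L d a i v : is_band s t rels (θ, L) -> ltgt (band_letter d L i) = a ->
  is_walk a v -> sorted nocancel v -> exists nu1 nu3,
  let nu := nu1 ++ L ++ nu3 in let y := walk_end a v in
  [/\ is_walk y nu /\ walk_end y nu = a, walk_end y nu1 = θ, sorted nocancel nu,
      forall l, head l nu \in inv_letter (last l v) :: L &
      forall l, last l nu = band_letter d L i].
Proof.
move=> hb hia hva hsv; set W := band_letter d L.
have [K [v2 [ev hv2]]] := band_agree_split L d i.+1 v.
have [N [Z1 [Z3 [eWin hWN hZ1]]]] := band_window_around d hb (i.+1 + K) i.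
exists (inv_word v2 ++ Z1), Z3; rewrite -!catA -eWin -/W.
set z := lsrc (W (i.+1 + K)); set Win := band_window d L (i.+1 + K) N.+1.
have hza : walk_end a (band_window d L i.+1 K) = z.
  by have [_] := band_window_walk d hb i.+1 K; rewrite -(band_letter_link d hb i) hia.
move: hva; rewrite ev walk_end_cat is_walk_cat hza => /andP[_ /is_walk_inv[hXw hXe]].
have [hWw hWe] := band_window_walk d hb (i.+1 + K) N.+1.
split=> [||||l0]; last by rewrite last_cat band_window_last.
- split; first by rewrite is_walk_cat hXw hXe hWw.
  by rewrite walk_end_cat hXe hWe addnS -(band_letter_link d hb) hWN.
- by rewrite walk_end_cat hXe; exact: hZ1.
- case ev2 : v2 => [|l v2'] in ev hv2 *; first exact: (band_window_sorted d hb (i.+1 + K) N.+1).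
  rewrite (sorted_nocancel_cat d) ?(band_window_sorted d hb) //; last first.
    by rewrite /inv_word /= rev_cons; case: rev.
  have hsv2 : sorted nocancel (l :: v2').
    by rewrite ev in hsv; apply: infix_sorted hsv; apply: suffix_infix.
  by rewrite sorted_inv_word hsv2 last_inv_word // inv_letterK /= andbT eq_sym (hv2 l v2').
- move=> l0; case ev2 : v2 => [|l v2'] in ev *; first by rewrite inE (mem_band_letter d hb) orbT.
  by rewrite head_inv_word_cat // last_cat mem_head.
Qed.

(* the double zero is  rho . nu . U . rho  with rho = r0 :: r and nu from [band_return] *)
Lemma DOZE_of_oriented_detour θ L d r0 r (v U : seq letter) a i :
  is_band s t rels (θ, L) -> in_I rels (r0 :: r) -> is_path s t (r0 :: r) ->
  is_walk a v -> sorted nocancel v -> walk_end a v = t (last r0 r) ->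
  last (Defs.inv (last r0 r)) v != dir (last r0 r) -> last r0 r \notin map fst L ->
  is_walk a U -> walk_end a U = s r0 -> sorted nocancel (U ++ dirs (r0 :: r)) ->
  ltgt (band_letter d L i) = a -> head (dir r0) U != inv_letter (band_letter d L i) ->
  has_DOZE s t rels.
Proof.
move=> hb hI hp hva hsv hwv hlv hnL hvU hwU hsU hia hhU; set R := dirs (r0 :: r).
have [nu1 [nu3 [[hnw hne] hn1 hns hnh hnl]]] := band_return hb hia hva hsv.
rewrite hwv in hnw hne hn1; set nu := nu1 ++ L ++ nu3 in hnw hne hns hnh hnl.
exists (s r0, R ++ nu1 ++ L ++ (nu3 ++ U) ++ R), (r0 :: r), (r0 :: r), nu1, L, (nu3 ++ U).
have eW : R ++ nu1 ++ L ++ (nu3 ++ U) ++ R = R ++ nu ++ U ++ R by rewrite /nu -!catA.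
have hR : is_walk (s r0) R by rewrite is_walk_dirs eqxx hp.
have eR : walk_end (s r0) R = t (last r0 r) by rewrite walk_end_dirs.
have hnu : nu != [::] by rewrite /nu; case: (nu1); case: (L) (band_size_gt0 hb).
split=> //; split.
  rewrite valid_walkE eW is_walk_cat hR eR is_walk_cat hnw hne.
  by rewrite is_walk_cat hvU hwU hR.
split.
  change (is_true (sorted nocancel (R ++ nu1 ++ L ++ (nu3 ++ U) ++ R))).
  rewrite eW (sorted_nocancel_cat (Defs.inv (last r0 r))) ?nocancel_dirs //; last first.
    by rewrite -size_eq0 !size_cat /R /= !addnS.
  rewrite (sorted_nocancel_cat (dir r0)) ?hns ?hsU //=; last by case: (U).
  rewrite hnl andbT; apply/andP; split; last by case: (U) hhU.
  set e := last r0 r.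
  have -> : head (Defs.inv e) (nu ++ U ++ R) = head (Defs.inv e) nu by case: (nu) hnu.
  rewrite /R /= last_map -/e; case/predU1P: (hnh (Defs.inv e)) => [->|hL].
    by rewrite (inj_eq inv_letter_inj).
  apply: contra hnL => /eqP he.
  by rewrite -[last r0 r]/((inv_letter (dir e)).1) -he map_f.
split=> //; split=> //.
have -> : wend s t (s r0, R ++ nu1) = θ.
  by change (walk_end (s r0) (R ++ nu1) = θ); rewrite walk_end_cat eR.
by [].
Qed.

(* traverse the band in the direction whose letter into a does not cancel the first letter of U *)
Lemma DOZE_of_band_detour θ L r0 r (v U : seq letter) a :
  is_band s t rels (θ, L) -> a \in wverts s t (θ, L) ->
  in_I rels (r0 :: r) -> is_path s t (r0 :: r) ->
  is_walk a v -> sorted nocancel v -> walk_end a v = t (last r0 r) ->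
  last (Defs.inv (last r0 r)) v != dir (last r0 r) -> last r0 r \notin map fst L ->
  is_walk a U -> walk_end a U = s r0 -> sorted nocancel (U ++ dirs (r0 :: r)) ->
  has_DOZE s t rels.
Proof.
move=> hb ha hI hp hva hsv hwv hlv hnL hvU hwU hsU; set d := dir r0.
have [i hia] := band_letter_to d hb ha.
have [hhU|hhU] := eqVneq (head d U) (inv_letter (band_letter d L i)); last first.
  exact: (DOZE_of_oriented_detour hb hI hp hva hsv hwv hlv hnL hvU hwU hsU hia hhU).
have [j hj] := band_letter_inv d i.+1 (band_size_gt0 hb).
apply: (DOZE_of_oriented_detour (band_inv hb) hI hp hva hsv hwv hlv _ hvU hwU hsU
  (d := d) (i := j)).
- by rewrite /inv_word map_rev mem_rev -map_comp.
- by rewrite hj ltgt_inv -(band_letter_link d hb).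
- rewrite hj inv_letterK hhU eq_sym -nocancelE.
  by have [] := band_letter_succ d hb i.
Qed.


Lemma infix_invs_dirs (Y Z : seq Ar) : infix (invs Y) (dirs Z) = (Y == [::]).
Proof.
case: Y => [|y Y]; first exact: infix0s.
apply/negP => /mem_infix /(_ _ (mem_head _ _)).
by case/mapP.
Qed.

Lemma zero_relation_straddles x u c q :
  str x u -> ~~ in_I rels (c :: q) -> ~ no_zero_relation rels (x, u ++ dirs (c :: q)) ->
  exists A p0 P, u = A ++ dirs (p0 :: P) /\ in_I rels (p0 :: P ++ c :: q).
Proof.
move=> [_ [_ hzu]] hnI hz.
have [p [/hasP[r0 hr0 hr0p] hp]] : exists p, in_I rels p /\
    (infix (dirs p) (u ++ dirs (c :: q)) \/ infix (invs (rev p)) (u ++ dirs (c :: q))).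
  apply: NNPP => hne; apply: hz => p hpI /=.
  by split; apply/negP => hi; apply: hne; exists p; split=> //; [left|right].
have hI0 : in_I rels r0 by apply/hasP; exists r0 => //; apply: infix_refl.
have nz_r0 : r0 != [::].
  by apply: contra hnI => /eqP e0; apply/hasP; exists r0; rewrite // e0 infix0s.
have [hd hi] := hzu _ hI0.
case: hp => [/(infix_trans (infix_map (@dir Ar) hr0p))|].
  case/infix_cat_cases => [h|h|[X1 [X2 [A [B [e1 hX1 hX2 eu eB]]]]]].
  - by rewrite h in hd.
  - by move: h; rewrite (infix_map_inj _ _ dir_inj) => /in_I_infix /(_ hI0); rewrite (negbTE hnI).
  - have eX1 : X1 = dirs (take (size X1) r0) by rewrite map_take e1 take_size_cat.
    case eP : (take (size X1) r0) eX1 => [|p0 P] eX1; first by rewrite eX1 in hX1.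
    exists A, p0, P; split; first by rewrite eu eX1.
    apply: in_I_infix hI0; rewrite -(infix_map_inj _ _ dir_inj) -cat_cons map_cat -eX1 eB e1 catA.
    exact: prefix_infix.
have hrev : infix (invs (rev r0)) (invs (rev p)) by apply: infix_map; rewrite infix_rev.
move/(infix_trans hrev).
case/infix_cat_cases => [h|h|[X1 [X2 [A [B [e1 hX1 hX2 eu eB]]]]]].
- by rewrite h in hi.
- by move: h; rewrite infix_invs_dirs -size_eq0 size_rev size_eq0 (negbTE nz_r0).
- move: (prefix_infix X2 B); rewrite -eB.
  have eX2 : X2 = invs (drop (size X1) (rev r0)) by rewrite map_drop e1 drop_size_cat.
  by rewrite eX2 infix_invs_dirs => /eqP e0; move: hX2; rewrite eX2 e0.
Qed.

Lemma Darr_Dobj a b : Darr a b -> Dobj a (s b) /\ Dobj a (t b).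
Proof.
move=> [[x M] [hW /mapP[l hl eb]]]; have [[hv _] _] := hW.
rewrite valid_walkE in hv.
have hs := lsrc_in_wverts hv hl; have ht := ltgt_in_wverts x hl.
by case: l eb hl hs ht => b' [] /= -> _ hs ht; split; exists (x, M).
Qed.

Lemma sorted_nocancel_cat_dirs u c q : sorted nocancel u -> last (dir c) u != Defs.inv c ->
  sorted nocancel (u ++ dirs (c :: q)).
Proof.
case/lastP: u => [|u l] hsu huc; first exact: nocancel_dirs.
rewrite (sorted_nocancel_cat (dir c)) ?hsu ?nocancel_dirs ?andbT //=; last by case: (u).
by apply: contra huc => /eqP e1; rewrite -[last _ _]inv_letterK -e1.
Qed.

Definition D_closed_path a c q : Prop :=
  is_path s t (c :: q) -> ~~ in_I rels (c :: q) ->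
  Dobj a (s c) -> Dobj a (t (last c q)) -> forall b, b \in c :: q -> Darr a b.

Section ClosedPathInduction.
Variables (a : V) (c : Ar) (q : seq Ar).
Hypothesis IH : forall c' q', size q' < size q -> D_closed_path a c' q'.

Lemma D_closed_path_last : Darr a (last c q) -> D_closed_path a c q.
Proof.
case/lastP: q IH => [|q' e] IH' he hp hnI hx hy b; first by rewrite mem_seq1 => /eqP->.
rewrite last_rcons in he hy; rewrite -cats1 -cat_cons in hp hnI *.
rewrite mem_cat mem_seq1 => /orP[hb|/eqP-> //].
move: hp; rewrite /is_path (sorted_cat_link _ c) //= => /and3P[hp /eqP hj _].
apply: (IH' c q') => //; first by rewrite size_rcons.
- by apply: contra hnI; apply: in_I_infix; apply: prefix_infix.
- by rewrite hj; case: (Darr_Dobj he).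
Qed.

Lemma D_closed_path_head : Darr a c -> D_closed_path a c q.
Proof.
case: q IH => [|c' q'] IH' hc hp hnI hx hy b; first by rewrite mem_seq1 => /eqP->.
rewrite inE => /orP[/eqP-> //|hb].
move: hp; rewrite /is_path /= => /andP[/eqP hj hp].
apply: (IH' c' q') => //.
- by apply: contra hnI; apply: in_I_infix; apply: infix_cons.
- by rewrite -hj; case: (Darr_Dobj hc).
Qed.

End ClosedPathInduction.

Lemma D_closed_path_step θ L a c q :
  ~ has_DOZE s t rels -> is_band s t rels (θ, L) -> a \in wverts s t (θ, L) ->
  (forall c' q', size q' < size q -> D_closed_path a c' q') -> D_closed_path a c q.
Proof.
move=> hnd hb ha IH hp hnI hx hy; set e := last c q.
have [u [hu hwu]] := Dobj_string hx; have [hvu [hsu _]] := hu.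
have [v [hv hwv]] := Dobj_string hy; have [hvv [hsv _]] := hv.
rewrite valid_walkE in hvu; rewrite valid_walkE in hvv.
change (is_true (sorted nocancel u)) in hsu; change (is_true (sorted nocancel v)) in hsv.
have [hve|hve] := eqVneq (last (Defs.inv e) v) (dir e).
  apply: D_closed_path_last => //; apply: (Darr_string hv (start_in_wverts _ _)).
  have : dir e \in Defs.inv e :: v by rewrite -hve mem_last.
  by rewrite inE => /predU1P[//|/(map_f fst)].
have [heL|heL] := boolP (e \in map fst L).
  by apply: D_closed_path_last => //; apply: Darr_string (proj1 hb) ha heL.
have [huc|huc] := eqVneq (last (dir c) u) (Defs.inv c).
  apply: D_closed_path_head => //; apply: (Darr_string hu (start_in_wverts _ _)).
  have : Defs.inv c \in dir c :: u by rewrite -huc mem_last.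
  by rewrite inE => /predU1P[//|/(map_f fst)].
have hww : is_walk a (u ++ dirs (c :: q)) by rewrite is_walk_cat hvu hwu is_walk_dirs eqxx.
have hsw := sorted_nocancel_cat_dirs q hsu huc.
have [hz|hz] := classic (no_zero_relation rels (a, u ++ dirs (c :: q))).
  move=> b hbq; apply: (@Darr_string a (u ++ dirs (c :: q))) (start_in_wverts _ _) _.
    by split; rewrite ?valid_walkE.
  by rewrite map_cat mem_cat -map_comp map_id hbq orbT.
case: hnd; have [A [p0 [P [eu hI]]]] := zero_relation_straddles hu hnI hz.
move: hww hsw; rewrite eu -catA -map_cat cat_cons is_walk_cat is_walk_dirs.
move=> /and3P[hA /eqP hsA hpath] hsw.
have elast : last p0 (P ++ c :: q) = e by rewrite last_cat.
by apply: (DOZE_of_band_detour hb ha hI hpath hvv hsv _ _ _ hA (esym hsA) hsw); rewrite elast.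
Qed.

Lemma D_closed_paths θ L a :
  ~ has_DOZE s t rels -> is_band s t rels (θ, L) -> a \in wverts s t (θ, L) ->
  forall c q, D_closed_path a c q.
Proof.
move=> hnd hb ha c q; have [n] := ubnP (size q); elim: n c q => // n IHn c q hq.
apply: D_closed_path_step hnd hb ha _ => c' q' hq'.
by apply: IHn; apply: leq_trans hq' _.
Qed.

End Walks.

Theorem lemma2p3 (V Ar : finType) (s t : Ar -> V) (rels : seq (seq Ar)) :
  standing_assumptions s t rels ->
  forall (Theta : walk V Ar) (a : V),
    is_band s t rels Theta ->
    (forall b : Ar, ~ entering s t Theta b) ->
    a \in wverts s t Theta ->
    (forall b : Ar, s b = a -> b \in warrows Theta) ->
    (forall b : Ar,
        D_obj s t rels (trivial_walk Ar a) (s b) ->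
        D_obj s t rels (trivial_walk Ar a) (t b) ->
        D_arr s t rels (trivial_walk Ar a) b) /\
    (forall (b0 : Ar) (p : seq Ar),
        is_path s t (b0 :: p) -> ~~ in_I rels (b0 :: p) ->
        D_obj s t rels (trivial_walk Ar a) (s b0) ->
        D_obj s t rels (trivial_walk Ar a) (t (last b0 p)) ->
        forall b, b \in b0 :: p -> D_arr s t rels (trivial_walk Ar a) b).
Proof.
move=> [[hrels _] [hnd _]] [θ L] a hb _ ha _.
have hD := D_closed_paths hnd hb ha.
split=> [b hx hy|]; last exact: hD.
have hb1 : ~~ in_I rels [:: b].
  by apply/hasP => -[r /hrels[_ hr] /size_infix /(leq_trans hr)].
by apply: (hD b [::]) => //; apply: mem_head.
Qed.
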